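(* Let $\mathbf A$ be a super-paraorthomodular lattice and $\mathrm{Sh}(\mathbf A)=\{a\in A: a\land a'=0\}$. Then $(\mathrm{Sh}(\mathbf A),\leq,{}',0,1)$, with the order and involution inherited from $\mathbf A$, is a sub-orthomodular poset of $\mathbf A$.
   Context: A pseudo-Kleene lattice is an algebra $(A,\land,\lor,{}',0,1)$ that is a bounded lattice with an antitone involution ${}'$ ($x\leq y\Rightarrow y'\leq x'$, $x''=x$) satisfying $x\land x'\leq y\lor y'$. It is super-paraorthomodular if for all $x,y$: (SP1) $x\leq y$ and $x'\land y=(x\land x')\lor(y\land y')$ imply $y\land(x\lor x')=x\lor(y\land y')$; (SP2) $x\leq y$ implies $(x\land x')\lor(y\land y')=(x'\land y)\land(x'\land y)'$. An orthomodular poset is a bounded poset $(P,\leq,0,1)$ with antitone involution ${}'$ such that: $x\land x'=0$ for all $x$ (the meet exists in $P$ and is $0$); whenever $x\leq y'$ the join $x\lor y$ exists in $P$; and (paraorthomodularity) if $x\leq y$ and the meet $x'\land y$ exists and equals $0$, then $x=y$. A subset $B\subseteq A$ containing $0,1$ and closed under ${}'$ is a sub-orthomodular poset of $\mathbf A$ if $(B,\leq,{}',0,1)$ is an orthomodular poset and, for $x,y\in B$ with $x\leq y'$, the join of $x,y$ in $B$ equals their join in $\mathbf A$. *)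

From mathcomp Require Import all_boot all_order.
Set Implicit Arguments. Unset Strict Implicit. Unset Printing Implicit Defensive.
Import Order.TTheory.
Local Open Scope order_scope.

Section Defs.
Context {disp : Order.disp_t} {A : tbLatticeType disp}.

Definition antitone_involution (c : A -> A) : Prop :=
  (forall x y : A, x <= y -> c y <= c x) /\ (forall x : A, c (c x) = x).

Definition pseudo_Kleene (c : A -> A) : Prop :=
  antitone_involution c /\
  (forall x y : A, x `&` c x <= y `|` c y).

Definition super_paraorthomodular (c : A -> A) : Prop :=
  pseudo_Kleene c /\
  (forall x y : A, x <= y ->
     c x `&` y = (x `&` c x) `|` (y `&` c y) ->
     y `&` (x `|` c x) = x `|` (y `&` c y)) /\
  (forall x y : A, x <= y ->
     (x `&` c x) `|` (y `&` c y) = (c x `&` y) `&` c (c x `&` y)).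

Definition is_meet_in (B : A -> Prop) (x y m : A) : Prop :=
  B m /\ m <= x /\ m <= y /\ (forall z, B z -> z <= x -> z <= y -> z <= m).
Definition is_join_in (B : A -> Prop) (x y j : A) : Prop :=
  B j /\ x <= j /\ y <= j /\ (forall z, B z -> x <= z -> y <= z -> j <= z).

(* (B, <=, c, \bot, \top) with order, involution and bounds inherited from A
   is an orthomodular poset (B is assumed to contain 0, 1 and be closed
   under c, so the restricted order is bounded with antitone involution). *)
Definition orthomodular_poset_on (B : A -> Prop) (c : A -> A) : Prop :=
  B \bot /\ B \top /\ (forall x, B x -> B (c x)) /\
  antitone_involution c /\
  (forall x, B x -> is_meet_in B x (c x) \bot) /\
  (forall x y, B x -> B y -> x <= c y -> exists j, is_join_in B x y j) /\
  (forall x y, B x -> B y -> x <= y -> is_meet_in B (c x) y \bot -> x = y).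

Definition sub_orthomodular_poset (B : A -> Prop) (c : A -> A) : Prop :=
  orthomodular_poset_on B c /\
  (forall x y j, B x -> B y -> x <= c y -> is_join_in B x y j -> j = x `|` y).

Definition Sh (c : A -> A) : A -> Prop := fun a => a `&` c a = \bot.
End Defs.

From mathcomp Require Import all_boot all_order.
Set Implicit Arguments. Unset Strict Implicit. Unset Printing Implicit Defensive.
Import Order.TTheory.
Local Open Scope order_scope.

(* For sharp x and y with x <= y', condition (SP2) collapses to
   (x | y) & (x | y)' = 0, so sharp elements are closed under orthogonal
   joins and the join of Sh(A) is the join of A.  For sharp x <= y, (SP2)
   shows that x' & y is sharp, so if 0 is the meet of x' and y in Sh(A) then
   x' & y = 0 in A; and (SP1), in which x | x' = 1 for sharp x, then reads y = x whenever
   x' & y = 0: paraorthomodularity. *)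

Section BoundsInPredicate.
Context {disp : Order.disp_t} {A : tbLatticeType disp} (B : A -> Prop).

Lemma join_is_join_in (x y : A) : B (x `|` y) -> is_join_in B x y (x `|` y).
Proof.
move=> Bxy; split=> //; split; first exact: leUl.
by split=> [|z _ xz yz]; [exact: leUr | rewrite leUx xz yz].
Qed.

Lemma is_join_in_eq (x y j : A) :
  B (x `|` y) -> is_join_in B x y j -> j = x `|` y.
Proof.
move=> Bxy [_ [xj [yj j_least]]]; apply/le_anti.
by rewrite j_least ?leUl ?leUr //= leUx xj yj.
Qed.

Lemma bot_is_meet_in (x y : A) :
  B \bot -> x `&` y = \bot -> is_meet_in B x y \bot.
Proof.
move=> B0 xy0; split=> //; split; first exact: le0x.
by split=> [|z _ zx zy]; [exact: le0x | rewrite -xy0 lexI zx zy].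
Qed.

Lemma is_meet_in_bot_eq (x y : A) :
  B (x `&` y) -> is_meet_in B x y \bot -> x `&` y = \bot.
Proof.
move=> Bxy [_ [_ [_ m_greatest]]]; apply/le_anti.
by rewrite le0x andbT m_greatest ?leIl ?leIr.
Qed.

End BoundsInPredicate.

Section AntitoneInvolution.
Context {disp : Order.disp_t} {A : tbLatticeType disp} (c : A -> A).
Hypothesis c_anti : forall x y : A, x <= y -> c y <= c x.
Hypothesis cK : involutive c.

Lemma le_c (x y : A) : (c x <= c y) = (y <= x).
Proof. by apply/idP/idP => /c_anti; rewrite ?cK. Qed.

Lemma c_join (x y : A) : c (x `|` y) = c x `&` c y.
Proof.
apply/le_anti; rewrite lexI !le_c leUl leUr /=.
by rewrite -[c x `&` c y]cK le_c leUx -{1}[x]cK -{2}[y]cK !le_c leIl leIr.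
Qed.

Lemma c_top : c \top = \bot.
Proof. by apply/le_anti; rewrite le0x andbT -[\bot]cK le_c lex1. Qed.

Lemma c_bot : c \bot = \top.
Proof. by rewrite -c_top cK. Qed.

Lemma Sh_bot : Sh c \bot.
Proof. exact: meet0x. Qed.

Lemma Sh_top : Sh c \top.
Proof. by rewrite /Sh c_top meetx0. Qed.

Lemma Sh_c (x : A) : Sh c x -> Sh c (c x).
Proof. by rewrite /Sh cK meetC. Qed.

Lemma Sh_join_c (x : A) : Sh c x -> x `|` c x = \top.
Proof. by move=> Shx; rewrite -[LHS]cK c_join cK meetC Shx c_bot. Qed.

Section SuperParaorthomodular.
Hypothesis SP1 : forall x y : A, x <= y ->
  c x `&` y = (x `&` c x) `|` (y `&` c y) ->
  y `&` (x `|` c x) = x `|` (y `&` c y).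
Hypothesis SP2 : forall x y : A, x <= y ->
  (x `&` c x) `|` (y `&` c y) = (c x `&` y) `&` c (c x `&` y).

Lemma Sh_join (x y : A) : Sh c x -> Sh c y -> x <= c y -> Sh c (x `|` y).
Proof.
move=> Shx Shy xy'; have := SP2 xy'.
rewrite cK Shx (meetC (c y)) Shy joinxx -c_join cK => x_y_sharp.
by rewrite /Sh meetC x_y_sharp.
Qed.

Lemma Sh_meet_c_of_le (x y : A) :
  Sh c x -> Sh c y -> x <= y -> Sh c (c x `&` y).
Proof. by move=> Shx Shy xy; rewrite /Sh -(SP2 xy) Shx Shy joinxx. Qed.

Lemma Sh_paraorthomodular (x y : A) :
  Sh c x -> Sh c y -> x <= y -> c x `&` y = \bot -> x = y.
Proof.
move=> Shx Shy xy x'y0; have := SP1 xy.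
by rewrite x'y0 Shx Shy joinxx Sh_join_c // meetx1 joinx0 => ->.
Qed.

End SuperParaorthomodular.
End AntitoneInvolution.

Theorem lemma3p18 (disp : Order.disp_t) (A : tbLatticeType disp) (c : A -> A) :
  super_paraorthomodular c -> sub_orthomodular_poset (Sh c) c.
Proof.
move=> [[[c_anti cK] _] [SP1 SP2]].
split=> [|x y j Shx Shy xy' xy_join]; last first.
  by apply: is_join_in_eq xy_join; exact: Sh_join.
split; first exact: Sh_bot.
split; first exact: Sh_top.
split; first exact: Sh_c.
split; first by [].
split; first by move=> x Shx; apply: bot_is_meet_in => //; exact: Sh_bot.
split=> [x y Shx Shy xy'|x y Shx Shy xy x'y_meet].
  by exists (x `|` y); apply: join_is_join_in; exact: Sh_join.
apply: (Sh_paraorthomodular c_anti cK SP1) => //; apply: is_meet_in_bot_eq x'y_meet.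
exact: Sh_meet_c_of_le.
Qed.
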